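(* Let $(\alpha_n)_{n\ge0}$ be complex numbers with $0<|\alpha_n|<1$ for all $n$. For all nonnegative integers $n,r,s$, \[ \sum_{p\in\mathrm{Sch}_{n,r,s}}\mathrm{wt}_S(p)=\sum_{q\in\mathfrak{L}_{n,r,s}}\mathrm{wt}_L(q). \]
   Context: Set $\alpha_{-1}=-1$. A Łukasiewicz path is a lattice path in $\mathbb{Z}\times\mathbb{Z}_{\ge0}$ with steps $(1,k)$, $k\le1$ an integer; $\mathfrak{L}_{n,r,s}$ is the set of such paths from $(0,r)$ to $(n,s)$. $\mathrm{wt}_L$ is the product of step weights, where $(a,b)\to(a+1,b+1)$ has weight $1$ and $(a,b)\to(a+1,b-k)$, $k=0,\dots,b$, has weight $-\alpha_b\overline{\alpha_{b-k-1}}\prod_{j=b-k}^{b-1}(1-|\alpha_j|^2)$ (empty product $1$). A Schröder path is a lattice path in $\mathbb{Z}\times\mathbb{Z}_{\ge0}$ with steps $(1,1)$, $(1,0)$, $(0,-1)$; $\mathrm{Sch}_{n,r,s}$ is the set of Schröder paths from $(0,r)$ to $(n,s)$ not starting with a step $(0,-1)$. $\mathrm{wt}_S$ is the product of step weights: $(a,b)\to(a+1,b+1)$ weight $1$; $(a,b)\to(a+1,b)$ weight $-\overline{\alpha_{b-1}}/\overline{\alpha_b}$; $(a,b)\to(a,b-1)$ weight $\frac{\overline{\alpha_{b-2}}}{\overline{\alpha_{b-1}}}(1-|\alpha_{b-1}|^2)$. *)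

From mathcomp Require Import all_boot all_order all_algebra.
Set Implicit Arguments.
Unset Strict Implicit.
Unset Printing Implicit Defensive.
Import Order.TTheory GRing.Theory Num.Theory.
Local Open Scope ring_scope.

(* Complex numbers: an arbitrary numClosedFieldType C (e.g. C = R[i] for a
   real closed / real field R); conjugation is Num.conj (postfix ^star), modulus `|x|. *)

Section Paths.
Variable C : numClosedFieldType.
Variable alpha : nat -> C.

(* am1 m = alpha_{m-1}, with the convention alpha_{-1} = -1. *)
Definition am1 (m : nat) : C := if m is m'.+1 then alpha m' else -1.

(* ---------------- Lukasiewicz paths ----------------
   A path from (0,r) to (n,s) with steps (1,k), k <= 1, in Z x Z_{>=0}
   is encoded by the sequence of heights h_1,...,h_n after each step
   (h_0 = r).  Heights along such a path never exceed r + n, so the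
   heights are taken in 'I_(r+n).+1 and the encoding is a bijection. *)

Definition luk_step_wt (b c : nat) : C :=
  if c == b.+1 then 1
  else - alpha b * (am1 c)^* * \prod_(c <= j < b) (1 - `|alpha j| ^+ 2).

Fixpoint luk_valid (b : nat) (hs : seq nat) : bool :=
  if hs is c :: hs' then (c <= b.+1)%N && luk_valid c hs' else true.

Fixpoint luk_wt (b : nat) (hs : seq nat) : C :=
  if hs is c :: hs' then luk_step_wt b c * luk_wt c hs' else 1.

Definition luk_path (n r s : nat) (t : n.-tuple 'I_(r + n).+1) : bool :=
  luk_valid r (map val t) && (last r (map val t) == s).

Definition luk_sum (n r s : nat) : C :=
  \sum_(t : n.-tuple 'I_(r + n).+1 | @luk_path n r s t) luk_wt r (map val t).

(* ---------------- Schroeder paths ----------------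
   Steps coded in 'I_3 :  0 = (1,1) up,  1 = (1,0) flat,  2 = (0,-1) down.
   A path from (0,r) to (n,s) is a finite word of steps; it has exactly n
   non-down steps, at most n up steps, hence at most r + n down steps, so
   its length is at most r + 2n.  Paths are enumerated by their length
   m <= r + 2n and their word in m.-tuple 'I_3. *)

Fixpoint sch_end (b : nat) (w : seq 'I_3) : option nat :=
  if w is x :: w' then
    match val x with
    | 0 => sch_end b.+1 w'
    | 1 => sch_end b w'
    | _ => if b is b'.+1 then sch_end b' w' else None
    end
  else Some b.

Definition sch_xlen (w : seq 'I_3) : nat := count (fun x : 'I_3 => val x != 2%N) w.

Definition sch_step_wt (x : 'I_3) (b : nat) : C :=
  match val x with
  | 0 => 1
  | 1 => - (am1 b)^* / (alpha b)^*
  | _ => (am1 b.-1)^* / (am1 b)^* * (1 - `|am1 b| ^+ 2)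
  end.

Fixpoint sch_wt (b : nat) (w : seq 'I_3) : C :=
  if w is x :: w' then
    sch_step_wt x b *
    sch_wt (match val x with 0 => b.+1 | 1 => b | _ => b.-1 end) w'
  else 1.

Definition sch_path (n r s : nat) (w : seq 'I_3) : bool :=
  [&& sch_end r w == Some s, sch_xlen w == n & val (head ord0 w) != 2%N].

Definition sch_sum (n r s : nat) : C :=
  \sum_(m < (r + n + n).+1)
    \sum_(t : m.-tuple 'I_3 | sch_path n r s t) sch_wt r t.

End Paths.

From mathcomp Require Import all_boot all_order all_algebra.
From mathcomp Require Import ring zify.
Import Order.TTheory GRing.Theory Num.Theory.
Local Open Scope ring_scope.

(* Both sides satisfy the same transfer recursion in the length n.  Let
   L n b be the Łukasiewicz sum from height b, P n b the Schröder sum from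
   height b (paths not starting with a down step) and Q n b the sum over all
   Schröder paths from height b.  Splitting off the first step(s) gives
   P (n+1) b = Q n (b+1) + f_b Q n b  and  Q n b = P n b + d_b Q n (b-1),
   so Q n b = sum_(c <= b) D b c P n c with D b c = d_b d_(b-1) ... d_(c+1).
   The Łukasiewicz step weight b -> c telescopes into D (b+1) c + f_b D b c
   (an up step or a flat step followed by down steps), hence P and L obey
   the same recursion with the same initial values. *)

Section TupleSums.
Variable R : nmodType.

Lemma big_tuple0 (T : finType) (P : pred (seq T)) (F : seq T -> R) :
  \sum_(t : 0.-tuple T | P t) F t = if P [::] then F [::] else 0.
Proof.
have tuple0E (t : 0.-tuple T) : t = [tuple] by apply: tuple0.
case: ifP => HP.
  by rewrite (big_pred1 [tuple]) // => t; rewrite (tuple0E t) HP; apply/esym/eqP.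
by rewrite big_pred0 // => t; rewrite (tuple0E t).
Qed.

Lemma big_tuple_cons (T : finType) m (P : pred (seq T)) (F : seq T -> R) :
  \sum_(t : m.+1.-tuple T | P t) F t =
  \sum_(x : T) \sum_(t : m.-tuple T | P (x :: t)) F (x :: t).
Proof.
rewrite pair_big_dep /=.
rewrite (reindex (fun p : T * m.-tuple T => [tuple of p.1 :: p.2])) //=.
exists (fun t : m.+1.-tuple T => (thead t, [tuple of behead t])).
  by move=> [x t] _ /=; rewrite theadE; congr pair; apply: val_inj.
by move=> t _; apply: val_inj => /=; rewrite [in RHS](tuple_eta t).
Qed.

End TupleSums.

Arguments big_tuple0 {R T}.
Arguments big_tuple_cons {R T m}.

Section WordSums.
Variables (R : pzSemiRingType) (T : finType).

(* Sums over all words of length below [M]; a large enough [M] stands for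
   the (finite) sum over words of arbitrary length. *)
Definition sum_words M (P : pred (seq T)) (F : seq T -> R) : R :=
  \sum_(m < M) \sum_(t : m.-tuple T | P t) F t.

Lemma sum_wordsS M P F : sum_words M.+1 P F = (if P [::] then F [::] else 0) +
  \sum_(x : T) sum_words M (fun w => P (x :: w)) (fun w => F (x :: w)).
Proof.
rewrite /sum_words big_ord_recl big_tuple0; congr (_ + _).
by rewrite exchange_big /=; apply: eq_bigr => m _; rewrite big_tuple_cons.
Qed.

Lemma eq_sum_words M (P P' : pred (seq T)) (F F' : seq T -> R) :
  P =1 P' -> {in P, F =1 F'} -> sum_words M P F = sum_words M P' F'.
Proof.
by move=> eqPP' eqFF'; apply: eq_bigr => m _; apply: eq_big => t; [apply: eqPP' | apply: eqFF'].
Qed.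

Lemma sum_words_mull M P F k :
  sum_words M P (fun w => k * F w) = k * sum_words M P F.
Proof. by rewrite /sum_words big_distrr; apply: eq_bigr => m _; rewrite big_distrr. Qed.

Lemma sum_words_pred0 M P F : P =1 xpred0 -> sum_words M P F = 0.
Proof. by move=> P0; apply: big1 => m _; apply: big_pred0 => t; rewrite P0. Qed.

End WordSums.

Arguments sum_words {R T}.

Section Transfer.
Variables (C : numClosedFieldType) (alpha : nat -> C) (s : nat).

Fixpoint luk_from (n b : nat) : C :=
  if n is n'.+1 then \sum_(c < b.+2) luk_step_wt alpha b c * luk_from n' c
  else (b == s)%:R.

Lemma luk_tuple_sumE N n b : (b + n < N)%N ->
  \sum_(t : n.-tuple 'I_N | luk_valid b (map val t) && (last b (map val t) == s))
     luk_wt alpha b (map val t) = luk_from n b.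
Proof.
set P := fun b (w : seq 'I_N) => luk_valid b (map val w) && (last b (map val w) == s).
set F := fun b (w : seq 'I_N) => luk_wt alpha b (map val w).
elim: n b => [|n IHn] b bound.
  by rewrite (big_tuple0 (P b) (F b)) /P /F /=; case: eqP.
rewrite (big_tuple_cons (P b) (F b)) /P /F /=.
rewrite (bigID (fun c : 'I_N => c <= b.+1)%N) /=.
rewrite [X in _ + X]big1 ?addr0; last first.
  by move=> c /negbTE c_big; rewrite big_pred0 // => t; rewrite c_big.
rewrite (big_ord_widen_cond N xpredT (fun c => luk_step_wt alpha b c * luk_from n c));
  last by lia.
apply: eq_big => [//|c c_le].
rewrite -big_distrr /= -(IHn c); last by move: c_le; lia.
by congr (_ * _); apply: eq_bigl => t; rewrite c_le.
Qed.

Definition sch_from M n b := sum_words M (sch_path n b s) (sch_wt alpha b).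

Definition sch_any M n b :=
  sum_words M (fun w => (sch_end b w == Some s) && (sch_xlen w == n)) (sch_wt alpha b).

Definition flat_wt b : C := - (am1 alpha b)^* / (alpha b)^*.

Definition down_wt b : C :=
  (am1 alpha b.-1)^* / (am1 alpha b)^* * (1 - `|am1 alpha b| ^+ 2).

Lemma sch_fromS M n b : sch_from M.+1 n b =
  if n is k.+1 then sch_any M k b.+1 + flat_wt b * sch_any M k b else (b == s)%:R.
Proof.
rewrite /sch_from sum_wordsS !big_ord_recl big_ord0 addr0 /=.
rewrite [X in _ + (_ + (_ + X))]sum_words_pred0 ?addr0; last first.
  by move=> w; rewrite /sch_path /= !andbF.
case: n => [|k].
  rewrite !sum_words_pred0 ?addr0 => [|w|w]; rewrite /sch_path /= ?andbF //.
  by rewrite andbT (inj_eq (@Some_inj _)); case: (b == s).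
rewrite [sch_path _ _ _ _]/sch_path /= andbF add0r /sch_any -sum_words_mull.
by congr (_ + _); apply: eq_sum_words => w; rewrite /sch_path /= ?eqSS ?andbT // mul1r.
Qed.

Lemma sch_anyS M n b : sch_any M.+1 n b = sch_from M.+1 n b +
  if b is b'.+1 then down_wt b * sch_any M n b' else 0.
Proof.
rewrite /sch_any /sch_from !sum_wordsS !big_ord_recl !big_ord0 !addr0 /=.
rewrite [X in _ = _ + (_ + (_ + X)) + _]sum_words_pred0 ?addr0; last first.
  by move=> w; rewrite /sch_path /= !andbF.
rewrite -!addrA; congr (_ + _); first by rewrite /sch_path /= andbT.
congr (_ + _); first by apply: eq_sum_words => w; rewrite /sch_path /= ?andbT.
congr (_ + _); first by apply: eq_sum_words => w; rewrite /sch_path /= ?andbT.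
by case: b => [|b] /=; [rewrite sum_words_pred0 | rewrite -sum_words_mull].
Qed.

Fixpoint down_prod b c : C :=
  if b is b'.+1 then (if (b <= c)%N then 1 else down_wt b * down_prod b' c) else 1.

Definition down_conv n b := \sum_(c < b.+1) down_prod b c * luk_from n c.

Lemma down_convS n b : down_conv n b.+1 = luk_from n b.+1 + down_wt b.+1 * down_conv n b.
Proof.
rewrite /down_conv big_ord_recr /= leqnn mul1r addrC; congr (_ + _).
rewrite big_distrr; apply: eq_bigr => c _ /=.
by rewrite ltnNge -ltnS ltn_ord /= mulrA.
Qed.

Hypothesis alpha_neq0 : forall k, alpha k != 0.

Lemma conj_am1_neq0 b : (am1 alpha b)^* != 0.
Proof. by rewrite conjC_eq0; case: b => [|b] /=; rewrite ?oppr_eq0 ?oner_eq0 ?alpha_neq0. Qed.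

Lemma down_prodE b c : (c <= b)%N ->
  down_prod b c = (am1 alpha c)^* / (am1 alpha b)^* * \prod_(c <= j < b) (1 - `|alpha j| ^+ 2).
Proof.
elim: b => [|b IHb] c_le.
  have -> : c = 0%N by lia.
  by rewrite big_geq // mulr1 divff ?conj_am1_neq0.
rewrite /=; case: (leqP b.+1 c) => c_b.
  have -> : c = b.+1 by lia.
  by rewrite big_geq // mulr1 divff ?conj_am1_neq0.
rewrite IHb; last by lia.
rewrite big_nat_recr /=; last by lia.
have := conj_am1_neq0 b.+1; have := conj_am1_neq0 b; rewrite /down_wt /= => nz_b nz_b1.
by field; rewrite nz_b nz_b1.
Qed.

(* A Łukasiewicz step b -> c is an up or a flat step followed by down steps. *)
Lemma luk_step_wtE b c : (c <= b.+1)%N ->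
  luk_step_wt alpha b c =
  down_prod b.+1 c + (if (c <= b)%N then flat_wt b * down_prod b c else 0).
Proof.
move=> c_le; case: (leqP c b) => c_b; last first.
  have -> : c = b.+1 by lia.
  by rewrite /= leqnn ?ltnn addr0 /luk_step_wt eqxx.
rewrite (down_prodE _ _ c_le) (down_prodE _ _ c_b) /luk_step_wt ifN; last by apply/eqP; lia.
rewrite big_nat_recr /=; last by lia.
have := conj_am1_neq0 b.+1; have := conj_am1_neq0 b; rewrite /flat_wt normCK /= => nz_b nz_b1.
by field; rewrite nz_b nz_b1.
Qed.

Lemma sch_transfer M n b : (b + n + n < M)%N ->
  sch_from M n b = luk_from n b /\ sch_any M n b = down_conv n b.
Proof.
elim: M n b => [|M IHM] n b bound; first by lia.
have from_eq : sch_from M.+1 n b = luk_from n b.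
  rewrite sch_fromS; case: n bound => [|k] bound //.
  have [_ ->] := IHM k b.+1 ltac:(lia).
  have [_ ->] := IHM k b ltac:(lia).
  under [RHS]eq_bigr => c _ do rewrite (luk_step_wtE b c (ltn_ord c)) mulrDl.
  rewrite big_split /=; congr (_ + _).
  rewrite big_ord_recr /= ltnn mul0r addr0 /down_conv big_distrr /=.
  by apply: eq_bigr => c _; rewrite -ltnS ltn_ord mulrA.
split => //.
rewrite sch_anyS from_eq; case: b bound {from_eq} => [|b] bound.
  by rewrite addr0 /down_conv big_ord1 mul1r.
by have [_ ->] := IHM n b ltac:(lia); rewrite down_convS.
Qed.

End Transfer.

Theorem proposition3p11 (C : numClosedFieldType) (alpha : nat -> C)
  (halpha : forall k, 0 < `|alpha k| < 1) (n r s : nat) :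
  sch_sum alpha n r s = luk_sum alpha n r s.
Proof.
have alpha_neq0 k : alpha k != 0 by rewrite -normr_gt0; case/andP: (halpha k).
have [sch_eq _] := @sch_transfer _ _ s alpha_neq0 _ n r (leqnn _).
by rewrite /luk_sum (@luk_tuple_sumE _ _ s _ n r (ltnSn _)) -sch_eq.
Qed.
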